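(* Let $G$ be a graph with $n$ vertices and $m$ edges, and let $r$ be an integer with $3\leq r\leq n/2$. If $G$ contains no cycle of length $r$, then \[ \mu_n(G)\leq -\frac{4m^2}{n^3}+2(r-3). \]
   Context: All graphs are finite, simple and undirected. $\mu_n(G)$ denotes the smallest eigenvalue of the adjacency matrix of $G$. *)

From HB Require Import structures.
From mathcomp Require Import all_boot all_order all_algebra.
From mathcomp Require Import all_classical all_reals.
Set Implicit Arguments. Unset Strict Implicit. Unset Printing Implicit Defensive.
Import Order.TTheory GRing.Theory Num.Theory.
Local Open Scope ring_scope.

Definition simple_graph (n : nat) (e : rel 'I_n) : Prop :=
  symmetric e /\ irreflexive e.

Definition num_edges (n : nat) (e : rel 'I_n) : nat :=
  #|[set p : 'I_n * 'I_n | (p.1 < p.2)%N && e p.1 p.2]|.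

Definition adjacency (R : realType) (n : nat) (e : rel 'I_n) : 'M[R]_n :=
  \matrix_(i, j) (e i j)%:R.

(* G contains a cycle of length r (as a subgraph): r distinct vertices
   v_1,...,v_r with v_1 v_2, ..., v_{r-1} v_r, v_r v_1 edges. *)
Definition has_cycle_of_length (n : nat) (e : rel 'I_n) (r : nat) : Prop :=
  exists s : seq 'I_n, [/\ size s = r, uniq s & cycle e s].

Definition is_smallest_eigenvalue (R : realType) (n : nat) (A : 'M[R]_n) (mu : R)
  : Prop :=
  eigenvalue A mu /\ (forall a : R, eigenvalue A a -> mu <= a).

(* Fix an edge uv of G and evaluate the quadratic form of the adjacency
   matrix A on the difference of the rows u and v of A.  Its squared norm is
   at most d(u) + d(v), and its value is t(u) + t(v) - 2 (A^3)_uv, where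
   t(u) = (A^3)_uu is twice the number of edges inside the neighbourhood N(u).
   Summing mu |x|^2 <= x^T A x over the edges gives
     mu * sum_u d(u)^2 <= sum_u d(u) t(u) - sum_{u,w} ((A^2)_uw)^2.
   If G has no r-cycle then N(u) contains no path on r - 1 vertices, so
   repeatedly deleting a vertex of degree at most r - 3 shows that N(u) spans
   at most (r - 3) d(u) edges, i.e. t(u) <= 2 (r - 3) d(u).  Cauchy-Schwarz
   twice, sum ((A^2)_uw)^2 >= (sum_u d(u)^2)^2 / n^2 and
   sum_u d(u)^2 >= (2m)^2 / n, turns this into the bound. *)

From HB Require Import structures.
From mathcomp Require Import all_boot all_order all_algebra.
From mathcomp Require Import all_classical all_reals.
From mathcomp Require Import complex.
From mathcomp Require Import zify ring lra.
Import Order.TTheory GRing.Theory Num.Theory.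
Set Implicit Arguments. Unset Strict Implicit. Unset Printing Implicit Defensive.

Lemma sum_nat_card (T : finType) (A : {pred T}) (P : pred T) :
  \sum_(x in A) (P x : nat) = #|[set x in A | P x]|.
Proof. by rewrite -sum1dep_card big_mkcondr; apply: eq_bigr => x _; case: (P x). Qed.

Section DegeneratePaths.
Variables (T : finType) (e : rel T).
Hypotheses (e_sym : symmetric e) (e_irr : irreflexive e).

Definition deg_in (W : {set T}) (w : T) : nat := #|[set x in W | e w x]|.

Lemma min_deg_path (W : {set T}) k w0 :
  w0 \in W -> (forall w, w \in W -> k < deg_in W w) ->
  forall j, 0 < j <= k.+2 ->
  exists p, [/\ size p = j, uniq p, {subset p <= W} & sorted e p].
Proof.
move=> Ww0 Wdeg; elim=> [//|[|j] IH] /andP[_ lt_j].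
  by exists [:: w0]; split=> // x; rewrite inE => /eqP ->.
have [[|x q] [sp up Wp pp]] := IH (ltnW lt_j); first by [].
set z := last x q; have Wz : z \in W by apply: Wp; rewrite mem_last.
pose N := [set y in W | e z y].
have [y Ny yNp] : exists2 y, y \in N & y \notin x :: q.
  apply/exists_inP; apply: contraT; rewrite negb_exists_in => /forall_inP Np.
  have sub : N \subset [predD1 x :: q & z].
    apply/fintype.subsetP => y Ny; rewrite inE (negbNE (Np y Ny)) andbT.
    by apply: contraTneq Ny => ->; rewrite inE e_irr andbF.
  have : k < #|[predD1 x :: q & z]| := leq_trans (Wdeg z Wz) (subset_leq_card sub).
  have : #|x :: q| = 1 + #|[predD1 x :: q & z]| by rewrite (cardD1 z) mem_last.
  rewrite (card_uniqP up) sp; lia.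
exists (rcons (x :: q) y); split.
- by rewrite size_rcons sp.
- by rewrite rcons_uniq yNp up.
- by move=> t; rewrite mem_rcons inE => /predU1P[->|/Wp //]; case/setIdP: Ny.
- by move: pp; rewrite /= rcons_path => ->; case/setIdP: Ny.
Qed.

Lemma sum_deg_in_setD1 (W : {set T}) w : w \in W ->
  \sum_(x in W) deg_in W x = \sum_(x in W :\ w) deg_in (W :\ w) x + 2 * deg_in W w.
Proof.
move=> Ww; rewrite (bigD1 w) //= addnC mul2n -addnn addnA; congr (_ + _).
have deg_split x : x \in W :\ w -> deg_in W x = deg_in (W :\ w) x + e x w.
  move=> _; rewrite /deg_in (cardsD1 w [set y in W | e x y]) inE Ww /= addnC.
  by congr (_ + _); apply: eq_card => y; rewrite !inE; case: (y == w).
rewrite (eq_bigl (mem (W :\ w))) => [|x]; last by rewrite !inE andbC.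
rewrite (eq_bigr _ deg_split) big_split /= sum_nat_card; congr (_ + _).
apply: eq_card => y; rewrite !inE e_sym.
by case: eqP => [->|_]; rewrite ?e_irr ?andbF.
Qed.

Lemma sum_deg_in_le_or_path k (W : {set T}) :
  (exists p, [/\ size p = k.+2, uniq p, {subset p <= W} & sorted e p]) \/
  \sum_(w in W) deg_in W w <= 2 * k * #|W|.
Proof.
move: {2}#|W|.+1 (ltnSn #|W|) => N; elim: N W => // N IH W ltWN.
case: (set_0Vmem W) => [->|[w0 Ww0]]; first by right; rewrite big_set0.
have [/exists_inP[w Ww le_wk]|] := boolP [exists w in W, deg_in W w <= k].
  have cardW : #|W| = #|W :\ w|.+1 by rewrite (cardsD1 w W) Ww.
  have ltN : #|W :\ w| < N by rewrite -ltnS -cardW.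
  have [[p [sp up Wp pp]]|le_sum] := IH (W :\ w) ltN.
    by left; exists p; split=> // t /Wp /setD1P[].
  by right; rewrite (sum_deg_in_setD1 Ww) cardW; lia.
move/exists_inPn => Wdeg; left.
apply: (min_deg_path (k := k) Ww0) => [w /Wdeg|]; first by rewrite ltnNge.
by rewrite ltnSn.
Qed.

End DegeneratePaths.

Lemma sum_deg_in_neighbourhood_le n (e : rel 'I_n) r :
  symmetric e -> irreflexive e -> 3 <= r -> ~ has_cycle_of_length e r ->
  forall u, \sum_(i in [set x | e u x]) deg_in e [set x | e u x] i
            <= 2 * (r - 3) * #|[set x | e u x]|.
Proof.
move=> e_sym e_irr r_ge3 no_cycle u.
have [[[|x q] [sp up Np pp]]|//] :=
  sum_deg_in_le_or_path e_sym e_irr (r - 3) [set x | e u x]; first by [].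
have eux : e u x by move: (Np x (mem_head _ _)); rewrite inE.
have eul : e u (last x q) by move: (Np _ (mem_last x q)); rewrite inE.
(* A path on r - 1 vertices of N(u) closes through u into an r-cycle. *)
case: no_cycle; exists [:: u, x & q]; split.
- by move: sp => /= sp; lia.
- by rewrite cons_uniq up andbT; apply/negP => /Np; rewrite inE e_irr.
- by move: pp; rewrite /= rcons_path eux e_sym eul => ->.
Qed.

Lemma sum_card_neighbours n (e : rel 'I_n) : symmetric e -> irreflexive e ->
  \sum_u #|[set v | e u v]| = 2 * num_edges e.
Proof.
move=> e_sym e_irr.
have num_edgesE :
    num_edges e = \sum_(u : 'I_n) \sum_(v : 'I_n) ((u < v) && e u v : nat).
  rewrite /num_edges -sum1dep_card pair_big big_mkcond /=.
  by apply: eq_bigr => -[u v] _.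
have card_neighbours u : #|[set v | e u v]| = \sum_v (e u v : nat).
  by rewrite -sum1dep_card big_mkcond.
rewrite (eq_bigr _ (fun u _ => card_neighbours u)).
have e_split (u v : 'I_n) : (e u v : nat) = ((u < v) && e u v) + ((v < u) && e u v).
  by case: ltngtP => [||/val_inj ->]; rewrite ?addn0 ?e_irr.
under eq_bigr => u _ do under eq_bigr => v _ do rewrite e_split.
under eq_bigr => u _ do rewrite big_split.
have swap : \sum_(u : 'I_n) \sum_(v : 'I_n) ((v < u) && e u v : nat) =
    \sum_(u : 'I_n) \sum_(v : 'I_n) ((u < v) && e u v : nat).
  by rewrite exchange_big; apply: eq_bigr => u _; apply: eq_bigr => v _; rewrite e_sym.
by rewrite big_split /= swap -num_edgesE addnn -mul2n.
Qed.

Local Open Scope ring_scope.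

Lemma sqr_sum_le (R : realFieldType) (I : finType) (F : I -> R) :
  (\sum_i F i) ^+ 2 <= #|I|%:R * \sum_i F i ^+ 2.
Proof.
set N : R := #|I|%:R; set s := \sum_i F i.
have [I0|I_gt0] := posnP #|I|.
  have -> : s = 0 by rewrite /s big_pred0 // => i; move: I0; rewrite (cardD1 i).
  by rewrite /N I0 expr0n mul0r.
have N_gt0 : 0 < N by rewrite ltr0n.
have : 0 <= \sum_i (N * F i - s) ^+ 2 by apply: sumr_ge0 => i _; apply: sqr_ge0.
have -> : \sum_i (N * F i - s) ^+ 2 = N * (N * \sum_i F i ^+ 2 - s ^+ 2).
  rewrite (eq_bigr (fun i => N ^+ 2 * F i ^+ 2 - 2 * N * s * F i + s ^+ 2)) => [|i _];
    last by ring.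
  rewrite big_split sumrB /= -!mulr_sumr sumr_const -mulr_natr -/s -/N; ring.
by rewrite pmulr_rge0 // subr_ge0.
Qed.

(* [N = 0] is allowed, as then [D ^+ 2 / N ^+ 3 = 0]. *)
Lemma le_sub_sqr_div_cube (R : realFieldType) (mu rho S W D N : R) :
  0 <= N -> mu <= rho -> mu * S <= rho * S - W ->
  S ^+ 2 <= N ^+ 2 * W -> D ^+ 2 <= N * S ->
  mu <= - D ^+ 2 / N ^+ 3 + rho.
Proof.
move=> N_ge0 mu_le_rho le_muS SW DS; rewrite -lerBlDr.
have [->|N_gt0] := eqVneq N 0; first by rewrite expr0n /= invr0 mulr0 subr_le0.
have {N_gt0} N_gt0 : 0 < N by rewrite lt_def N_gt0.
rewrite ler_pdivlMr ?exprn_gt0 //.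
have S_ge0 : 0 <= S by rewrite -(pmulr_rge0 _ N_gt0) (le_trans (sqr_ge0 D)).
have [S0|S_gt0] := eqVneq S 0.
  move: DS; rewrite S0 mulr0 => DS.
  have D0 : D ^+ 2 = 0 by apply/eqP; rewrite eq_le DS sqr_ge0.
  by rewrite D0 oppr0 pmulr_lle0 ?exprn_gt0 // subr_le0.
have {S_gt0} S_gt0 : 0 < S by rewrite lt_def S_gt0.
have : (mu - rho) * N ^+ 2 <= - S.
  rewrite -(ler_pM2l S_gt0) mulrN -expr2.
  apply: le_trans (_ : _ <= - (N ^+ 2 * W)) _; last by rewrite lerN2.
  have -> : S * ((mu - rho) * N ^+ 2) = N ^+ 2 * ((mu - rho) * S) by ring.
  by rewrite -mulrN ler_wpM2l ?exprn_ge0 ?(ltW N_gt0) // mulrBl; lra.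
move/(ler_wpM2l (ltW N_gt0)); nra.
Qed.

Section SymmetricWeights.
Variables (R : realFieldType) (I : finType) (a : I -> I -> R).
Hypothesis a_sym : forall i j, a i j = a j i.

Definition deg u := \sum_v a u v.
Definition walks2 u w := \sum_i a u i * a i w.
Definition walks3 u v := \sum_i \sum_j a u i * a i j * a v j.
Definition qform (f : I -> R) := \sum_i \sum_j f i * a i j * f j.

Lemma sum_weighted_deg (f : I -> R) :
  \sum_u \sum_v a u v * (f u + f v) = 2 * \sum_u deg u * f u.
Proof.
have sum_fl : \sum_u \sum_v a u v * f u = \sum_u deg u * f u.
  by apply: eq_bigr => u _; rewrite mulr_suml.
have sum_fr : \sum_u \sum_v a u v * f v = \sum_u deg u * f u.
  rewrite exchange_big; apply: eq_bigr => v _.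
  by rewrite mulr_suml; apply: eq_bigr => u _; rewrite a_sym.
rewrite -[2]/(1 + 1) mulrDl mul1r -{1}sum_fl -sum_fr -big_split /=.
by apply: eq_bigr => u _; rewrite -big_split; apply: eq_bigr => v _; rewrite mulrDr.
Qed.

Lemma sum_walks2 : \sum_u \sum_w walks2 u w = \sum_u deg u ^+ 2.
Proof.
have walks2_deg u : \sum_w walks2 u w = \sum_i a u i * deg i.
  by rewrite /walks2 exchange_big; apply: eq_bigr => i _; rewrite mulr_sumr.
rewrite (eq_bigr _ (fun u _ => walks2_deg u)) exchange_big; apply: eq_bigr => i _.
by rewrite expr2 mulr_suml; apply: eq_bigr => u _; rewrite a_sym.
Qed.

Lemma sum_walks2_sqr :
  \sum_u \sum_v a u v * walks3 u v = \sum_u \sum_w walks2 u w ^+ 2.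
Proof.
apply: eq_bigr => u _.
have sqr_walks2 : \sum_w walks2 u w ^+ 2 = \sum_v a u v * \sum_w a v w * walks2 u w.
  under eq_bigr do rewrite expr2 {1}/walks2 mulr_suml.
  rewrite exchange_big; apply: eq_bigr => v _; rewrite mulr_sumr.
  by apply: eq_bigr => w _; rewrite mulrA.
rewrite sqr_walks2; apply: eq_bigr => v _; congr (_ * _).
rewrite /walks3 exchange_big; apply: eq_bigr => j _.
by rewrite mulrC /walks2 mulr_suml.
Qed.

Lemma walks3C u v : walks3 u v = walks3 v u.
Proof.
rewrite /walks3 exchange_big; apply: eq_bigr => i _; apply: eq_bigr => j _.
by rewrite (a_sym j i); ring.
Qed.

Lemma qform_row_diff u v :
  qform (fun i => a u i - a v i) = walks3 u u + walks3 v v - 2 * walks3 u v.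
Proof.
rewrite mulr_natl mulr2n {2}(walks3C u v) opprD addrA /qform /walks3.
rewrite (eq_bigr (fun i => \sum_j a u i * a i j * a u j + \sum_j a v i * a i j * a v j
   - \sum_j a u i * a i j * a v j - \sum_j a v i * a i j * a u j)) => [|i _].
  by rewrite !sumrB big_split.
by rewrite -big_split -!sumrB; apply: eq_bigr => j _ /=; ring.
Qed.

Hypothesis a_idem : forall i j, a i j ^+ 2 = a i j.

Lemma weight_ge0 u v : 0 <= a u v.
Proof. by rewrite -a_idem sqr_ge0. Qed.

Lemma deg_ge0 u : 0 <= deg u.
Proof. by apply: sumr_ge0 => v _; apply: weight_ge0. Qed.

Lemma sqr_row_diff_le u v : \sum_i (a u i - a v i) ^+ 2 <= deg u + deg v.
Proof.
rewrite -big_split; apply: ler_sum => i _ /=.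
have := a_idem u i; have := a_idem v i; have := sqr_ge0 (a u i); have := sqr_ge0 (a v i).
nra.
Qed.

Variable mu : R.
Hypothesis rayleigh : forall f : I -> R, mu * \sum_i f i ^+ 2 <= qform f.

Lemma rayleigh_le_diag i : mu <= a i i.
Proof.
have := rayleigh (fun j => (j == i)%:R).
have delta_sum (F : I -> R) : \sum_j (j == i)%:R * F j = F i.
  by rewrite (bigD1 i) //= eqxx mul1r big1 ?addr0 // => j /negbTE ->; rewrite mul0r.
under eq_bigr do rewrite expr2.
rewrite delta_sum /qform.
under eq_bigr do under eq_bigr do rewrite -mulrA.
under eq_bigr do rewrite -mulr_sumr.
rewrite delta_sum; under eq_bigr do rewrite mulrC.
by rewrite delta_sum eqxx mulr1.
Qed.

Lemma sum_deg_rayleigh_le : mu <= 0 ->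
  mu * \sum_u deg u ^+ 2 <= \sum_u deg u * walks3 u u - \sum_u \sum_w walks2 u w ^+ 2.
Proof.
move=> mu_le0.
(* Test the form on the difference of the rows u and v, then sum over the edges uv. *)
have edge_le u v :
    mu * deg u + mu * deg v <= walks3 u u + walks3 v v - 2 * walks3 u v.
  rewrite -mulrDr -qform_row_diff.
  exact: le_trans (ler_wnM2l mu_le0 (sqr_row_diff_le u v)) (rayleigh _).
have : \sum_u \sum_v a u v * (mu * deg u + mu * deg v) <=
    \sum_u \sum_v a u v * (walks3 u u + walks3 v v - 2 * walks3 u v).
  by apply: ler_sum => u _; apply: ler_sum => v _; apply: ler_wpM2l; rewrite ?weight_ge0.
have -> : \sum_u \sum_v a u v * (mu * deg u + mu * deg v) =
    2 * \sum_u deg u * (mu * deg u) := sum_weighted_deg (fun u => mu * deg u).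
have -> : \sum_u \sum_v a u v * (walks3 u u + walks3 v v - 2 * walks3 u v) =
    2 * \sum_u deg u * walks3 u u - 2 * \sum_u \sum_w walks2 u w ^+ 2.
  have /= <- := sum_weighted_deg (fun u => walks3 u u).
  rewrite -sum_walks2_sqr mulr_sumr -sumrB.
  apply: eq_bigr => u _; rewrite mulr_sumr -sumrB; apply: eq_bigr => v _ /=; ring.
under eq_bigr do rewrite mulrCA -expr2.
rewrite -mulr_sumr; lra.
Qed.

Lemma min_rayleigh_le (rho : R) :
  mu <= 0 -> 0 <= rho -> (forall u, walks3 u u <= rho * deg u) ->
  mu <= - (\sum_u deg u) ^+ 2 / #|I|%:R ^+ 3 + rho.
Proof.
move=> mu_le0 rho_ge0 walks3_le.
have sum_walks3_le : \sum_u deg u * walks3 u u <= rho * \sum_u deg u ^+ 2.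
  rewrite mulr_sumr; apply: ler_sum => u _.
  by rewrite expr2 mulrCA ler_wpM2l ?deg_ge0.
have walks2_sqr_le :
    (\sum_u deg u ^+ 2) ^+ 2 <= #|I|%:R ^+ 2 * \sum_u \sum_w walks2 u w ^+ 2.
  have := sqr_sum_le (fun p : I * I => walks2 p.1 p.2).
  rewrite card_prod natrM -expr2 -pair_bigA.
  by rewrite -(pair_bigA _ (fun u w => walks2 u w ^+ 2)) sum_walks2.
apply: le_sub_sqr_div_cube walks2_sqr_le (sqr_sum_le deg) => //.
- exact: le_trans rho_ge0.
- exact: le_trans (sum_deg_rayleigh_le mu_le0) (lerB sum_walks3_le _).
Qed.

End SymmetricWeights.

Section SpectralForm.
Local Open Scope sesquilinear_scope.
Variables (C : numClosedFieldType) (n : nat) (A : 'M[C]_n).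
Hypothesis A_normal : A \is normalmx.

Let P := spectralmx A.
Let D := spectral_diag A.

Lemma spectral_diag_eigenvalue i : eigenvalue A (D 0 i).
Proof.
have /orthomx_spectralP A_eq := A_normal.
apply/eigenvalueP; exists (row i P).
  have PA : P *m A = diag_mx D *m P by rewrite A_eq !mulmxA mulmxV ?spectral_unit ?mul1mx.
  by rewrite -row_mul PA mul_diag_mx; apply/rowP => j; rewrite !mxE.
apply/eqP => Pi0; have /row_unitarymxP/(_ i i) := spectral_unitarymx A.
by rewrite -/P Pi0 eqxx dotmxE mul0mx mxE => /eqP; rewrite eq_sym oner_eq0.
Qed.

Lemma spectral_form_ge (c : C) : (forall i, c <= D 0 i) ->
  forall y : 'rV_n, c * (y *m y^t*) 0 0 <= (y *m A *m y^t*) 0 0.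
Proof.
move=> c_le y; have /orthomx_spectralP A_eq := A_normal.
have P_unitary : P \is unitarymx := spectral_unitarymx A.
pose z := y *m P^t*.
have Pz : P *m y^t* = z^t* by rewrite /z trmx_mul map_mxM trmxCK.
have -> : y *m A *m y^t* = z *m diag_mx D *m z^t*.
  by rewrite -Pz /z -invmx_unitary // {1}A_eq !mulmxA.
have -> : y *m y^t* = z *m z^t*.
  by rewrite -Pz /z -invmx_unitary // mulmxA mulmxKV ?spectral_unit.
rewrite mul_mx_diag !mxE mulr_sumr -subr_ge0 -sumrB; apply: sumr_ge0 => j _.
by rewrite !mxE mulrAC [_ * D 0 j]mulrC -mulrBl mulr_ge0 ?subr_ge0 ?mul_conjC_ge0.
Qed.

End SpectralForm.

Lemma symmetric_rayleigh_ge (R : rcfType) n (A : 'M[R]_n) (mu : R) :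
  A^T = A -> (forall a, eigenvalue A a -> mu <= a) ->
  forall f : 'I_n -> R, mu * \sum_i f i ^+ 2 <= \sum_i \sum_j f i * A i j * f j.
Proof.
(* The spectral theorem is available over a closed field, hence the passage to R[i]. *)
move=> A_sym mu_le f; pose toC := real_complex R.
have conj_toC (x : R) : (toC x)^* = toC x.
  by rewrite conj_Creal //; apply/complex_realP; exists x.
pose Ac := map_mx toC A; pose y := map_mx toC (\row_i f i).
have Ac_herm : Ac \is hermsymmx.
  apply: realsym_hermsym.
    apply/is_hermitianmxP; rewrite expr0 scale1r map_mx_id // /Ac -[in LHS]A_sym.
    by apply/matrixP => i j; rewrite !mxE.
  by apply/mxOverP => i j; rewrite mxE; apply/complex_realP; exists (A i j).
have /(spectral_form_ge (hermitian_normalmx Ac_herm))/(_ y) :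
    forall i, toC mu <= spectral_diag Ac 0 i.
  move=> i; have /mxOverP/(_ 0 i)/complex_realP[k Dk] :=
    hermitian_spectral_diag_real Ac_herm.
  rewrite Dk lecR; apply: mu_le; rewrite -(eigenvalue_map toC).
  by move: (spectral_diag_eigenvalue (hermitian_normalmx Ac_herm) i); rewrite Dk.
have -> : (y *m y^t*)%sesqui 0 0 = toC (\sum_i f i ^+ 2).
  rewrite mxE /toC rmorph_sum; apply: eq_bigr => i _.
  by rewrite !mxE conj_toC rmorphXn.
have -> : (y *m Ac *m y^t*)%sesqui 0 0 = toC (\sum_i \sum_j f i * A i j * f j).
  rewrite mxE exchange_big /toC rmorph_sum; apply: eq_bigr => j _.
  rewrite !mxE mulr_suml rmorph_sum; apply: eq_bigr => i _.
  by rewrite !mxE conj_toC !rmorphM.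
by rewrite -rmorphM lecR.
Qed.

Section Adjacency.
Variables (R : realType) (n : nat) (e : rel 'I_n).
Hypotheses (e_sym : symmetric e) (e_irr : irreflexive e).
Local Notation A := (adjacency R e).
Local Notation N u := [set x | e u x].

Lemma adjacency_sym i j : A i j = A j i.
Proof. by rewrite !mxE e_sym. Qed.

Lemma adjacency_trmx : A^T = A.
Proof. by apply/matrixP => i j; rewrite mxE adjacency_sym. Qed.

Lemma adjacency_idem i j : A i j ^+ 2 = A i j.
Proof. by rewrite mxE; case: (e i j); rewrite ?expr0n ?expr1n. Qed.

Lemma adjacency_deg u : deg A u = #|N u|%:R.
Proof.
rewrite -sum1dep_card natr_sum big_mkcond /=.
by apply: eq_bigr => v _; rewrite mxE; case: (e u v).
Qed.

Lemma adjacency_walks3 u : walks3 A u u = (\sum_(i in N u) deg_in e (N u) i)%:R.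
Proof.
rewrite natr_sum [RHS]big_mkcond /=; apply: eq_bigr => i _; rewrite inE.
under eq_bigr do rewrite !mxE.
case: (e u i) => /=; last by rewrite big1 // => j _; rewrite !mul0r.
rewrite /deg_in -sum_nat_card natr_sum [RHS]big_mkcond /=; apply: eq_bigr => j _.
by rewrite inE mul1r; case: (e u j); rewrite ?mulr1 ?mulr0.
Qed.

Lemma adjacency_sum_deg : \sum_u deg A u = 2 * (num_edges e)%:R.
Proof.
rewrite (eq_bigr _ (fun u _ => adjacency_deg u)) -natr_sum.
by rewrite sum_card_neighbours // natrM.
Qed.

Lemma adjacency_walks3_le r : (3 <= r)%N -> ~ has_cycle_of_length e r ->
  forall u, walks3 A u u <= 2 * (r%:R - 3) * deg A u.
Proof.
move=> r_ge3 no_cycle u.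
rewrite adjacency_walks3 adjacency_deg -natrB // -!natrM ler_nat.
exact: sum_deg_in_neighbourhood_le.
Qed.

End Adjacency.

Theorem corollary5 (R : realType) (n : nat) (e : rel 'I_n) (r : nat)
  (hG : simple_graph e) (hr3 : (3 <= r)%N) (hrn : (2 * r <= n)%N)
  (hnocyc : ~ has_cycle_of_length e r) (mu : R)
  (hmu : is_smallest_eigenvalue (adjacency R e) mu) :
  mu <= - (4 * (num_edges e)%:R ^+ 2) / (n%:R ^+ 3) + 2 * (r%:R - 3).
Proof.
have [e_sym e_irr] := hG.
have rayleigh := symmetric_rayleigh_ge (adjacency_trmx R e_sym) hmu.2.
have n_gt0 : (0 < n)%N by lia.
have mu_le0 : mu <= 0.
  by have := rayleigh_le_diag rayleigh (Ordinal n_gt0); rewrite mxE e_irr.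
have rho_ge0 : 0 <= 2 * (r%:R - 3) :> R.
  by rewrite mulr_ge0 // subr_ge0 (ler_nat R 3).
have := min_rayleigh_le (adjacency_sym R e_sym) (adjacency_idem R e) rayleigh
  mu_le0 rho_ge0 (adjacency_walks3_le R e_sym e_irr hr3 hnocyc).
by rewrite adjacency_sum_deg // card_ord exprMn -(natrX R 2 2).
Qed.
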